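(* Let $n\in\mathbb{N}$, $a<b$, and let $f\colon[a,b]\to\mathbb{R}$ be such that the pointwise derivative $f^{(n-1)}$ exists and is continuous on $[a,b]$. Then the distributional derivative $f^{(n)}$ belongs to $\mathcal{A}_c$. Define $E_n(f)$ by $$\int_a^b f(x)\,dx = \frac{1}{(n-1)!}\sum_{k=0}^{n-2}\left[\frac{(b-a)^{k+1}(2n-k-2)!\,(n-k-1)!}{2^{2k+1}(2n-2k-2)!\,(k+1)!}\right]\left[f^{(k)}(a)+(-1)^{k}f^{(k)}(b)\right]+R_n+E_n(f),$$ where $R_n=\frac{(b-a)^nf^{(n-1)}(a)}{n!\,2^{2n-2}}$ if $n$ is odd and $R_n=0$ if $n$ is even. Then $$|E_n(f)|\leq \frac{\|f^{(n)}\|\,(b-a)^{n}}{(n-1)!\,2^{2n-2}},$$ and this estimate is sharp in the sense that the coefficient of $\|f^{(n)}\|$ cannot be reduced.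
   Context: $\mathcal{A}_c$ is the space of Schwartz distributions $g$ on $(a,b)$ that are the distributional derivative $g=G'$ of some $G\in C([a,b])$ with $G(a)=0$ (i.e. $\langle G',\psi\rangle=-\int_a^bG\psi'$ for all $\psi\in C_c^\infty((a,b))$); the integral is defined by $\int_a^x g=G(x)$ (continuous primitive integral). The Alexiewicz norm is $\|g\|=\sup_{a\le x\le b}|\int_a^x g|=\|G\|_\infty$. In particular $\|f^{(n)}\|=\sup_{a\le x\le b}|f^{(n-1)}(x)-f^{(n-1)}(a)|$. *)

From Stdlib Require Import Reals List Lra Arith.
From Coquelicot Require Import Coquelicot.
Open Scope R_scope.

Definition Icc (a b : R) (x : R) : Prop := a <= x <= b.

Definition deriv_on (a b : R) (F G : R -> R) : Prop :=
  forall x, Icc a b x ->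
    filterlim (fun y => (F y - F x) / (y - x))
      (within (fun y => Icc a b y /\ y <> x) (locally x)) (locally (G x)).

Definition cont_on (a b : R) (F : R -> R) : Prop :=
  forall x, Icc a b x -> filterlim F (within (Icc a b) (locally x)) (locally (F x)).

Definition derivs_hyp (n : nat) (a b : R) (f : R -> R) (D : nat -> R -> R) : Prop :=
  (forall x, Icc a b x -> D 0%nat x = f x) /\
  (forall k, (k < n - 1)%nat -> deriv_on a b (D k) (D (S k))) /\
  cont_on a b (D (n - 1)%nat).

Definition test_fun (a b : R) (psi : R -> R) : Prop :=
  (forall k x, ex_derive_n psi k x) /\
  exists c d, a < c /\ c <= d /\ d < b /\ forall x, (x < c \/ d < x) -> psi x = 0.

Definition distr_deriv (n : nat) (a b : R) (f : R -> R) : (R -> R) -> R :=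
  fun psi => (-1) ^ n * RInt (fun x => f x * Derive_n psi n x) a b.

(* the distribution T belongs to A_c: T = G' with G in C([a,b]), G(a) = 0 *)
Definition in_Ac (a b : R) (T : (R -> R) -> R) : Prop :=
  exists G : R -> R, cont_on a b G /\ G a = 0 /\
    forall psi, test_fun a b psi -> T psi = - RInt (fun x => G x * Derive psi x) a b.

Definition sup_norm (a b : R) (G : R -> R) : R :=
  real (Lub_Rbar (fun y => exists x, Icc a b x /\ y = Rabs (G x))).

(* Alexiewicz norm ||f^{(n)}|| = sup_{a<=x<=b} |f^{(n-1)}(x) - f^{(n-1)}(a)| *)
Definition alex_norm_deriv (n : nat) (a b : R) (D : nat -> R -> R) : R :=
  sup_norm a b (fun x => D (n - 1)%nat x - D (n - 1)%nat a).

Definition sum_range (m : nat) (g : nat -> R) : R :=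
  fold_right Rplus 0 (map g (seq 0 m)).

Definition coef (n : nat) (a b : R) (k : nat) : R :=
  ((b - a) ^ (k + 1) * INR (fact (2 * n - k - 2)) * INR (fact (n - k - 1))) /
  (2 ^ (2 * k + 1) * INR (fact (2 * n - 2 * k - 2)) * INR (fact (k + 1))).

Definition Rterm (n : nat) (a b : R) (D : nat -> R -> R) : R :=
  if Nat.odd n then (b - a) ^ n * D (n - 1)%nat a / (INR (fact n) * 2 ^ (2 * n - 2))
  else 0.

Definition En (n : nat) (a b : R) (f : R -> R) (D : nat -> R -> R) : R :=
  RInt f a b
  - (1 / INR (fact (n - 1))) *
      sum_range (n - 1) (fun k => coef n a b k * (D k a + (-1) ^ k * D k b))
  - Rterm n a b D.

Definition Kn (n : nat) (a b : R) : R :=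
  (b - a) ^ n / (INR (fact (n - 1)) * 2 ^ (2 * n - 2)).

(* Let W_(n-1) be the Chebyshev polynomial U_(n-1) of the second kind transported from [-1, 1]
   to [a, b] and scaled so that its (n-1)-st derivative is 1, and let W_j be its successive
   derivatives, down to W_0 = 1.  Integrating [f = W_0 f] by parts n-1 times produces boundary
   terms whose coefficients are the values U_(n-1)^(j)(±1), i.e. the quadrature rule, plus
   (-1)^(n-1) int_a^b W_(n-1) f^(n-1).  Splitting f^(n-1) = G + f^(n-1)(a), with G the continuous
   primitive of f^(n), the constant part gives R_n and E_n(f) = ± int_a^b W_(n-1) G, so
   |E_n(f)| <= ||f^(n)|| int_a^b |W_(n-1)|.  Under t = (a+b)/2 + (b-a)/2 cos th the weight
   U_(n-1)(x) dx becomes sin (n th) dth, and int_0^pi |sin (n th)| = 2 gives the constant.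
   It is sharp because G can be any continuous function with G(a) = 0, in particular a
   continuous approximation of the sign of W_(n-1).  The same integrations by parts against a
   test function show that f^(n) is the distributional derivative of G. *)

From Stdlib Require Import Reals Lra Lia List Arith.
From Coquelicot Require Import Coquelicot.
Open Scope R_scope.

Lemma ball_Rabs (x d y : R) : ball x d y <-> Rabs (y - x) < d.
Proof. reflexivity. Qed.

Definition clamp (a b x : R) : R := Rmax a (Rmin b x).

Lemma clamp_Icc a b x : a <= b -> Icc a b (clamp a b x).
Proof. unfold Icc, clamp, Rmax, Rmin; repeat destruct Rle_dec; lra. Qed.

Lemma clamp_id a b x : Icc a b x -> clamp a b x = x.
Proof. unfold Icc, clamp, Rmax, Rmin; repeat destruct Rle_dec; lra. Qed.

Lemma clamp_lipschitz a b x y : a <= b -> Rabs (clamp a b y - clamp a b x) <= Rabs (y - x).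
Proof.
  unfold clamp, Rmax, Rmin; intros; repeat destruct Rle_dec;
    unfold Rabs; repeat destruct Rcase_abs; lra.
Qed.

Lemma continuous_clamp a b x : a <= b -> continuous (clamp a b) x.
Proof.
  intros Hab P [e He]; exists e; intros y Hy; apply He, ball_Rabs.
  eapply Rle_lt_trans; [apply clamp_lipschitz, Hab | exact Hy].
Qed.

Lemma cont_on_clamp a b F x : a <= b -> cont_on a b F ->
  continuous (fun y => F (clamp a b y)) x.
Proof.
  intros Hab HF P HP.
  destruct (HF _ (clamp_Icc a b x Hab) P HP) as [e He].
  exists e; intros y Hy; apply He; [|apply clamp_Icc, Hab].
  apply ball_Rabs; eapply Rle_lt_trans; [apply clamp_lipschitz, Hab | exact Hy].
Qed.

Lemma continuous_cont_on a b F : (forall x, continuous F x) -> cont_on a b F.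
Proof. intros HF x _; eapply filterlim_filter_le_1; [apply filter_le_within | apply HF]. Qed.

Lemma cont_on_ext a b F G : (forall x, Icc a b x -> F x = G x) -> cont_on a b F -> cont_on a b G.
Proof.
  intros E HF x Hx P HP; rewrite <- E in HP by exact Hx.
  destruct (HF x Hx P HP) as [e He]; exists e; intros y Hy Iy; rewrite <- E by exact Iy; auto.
Qed.

Lemma cont_on_const a b c : cont_on a b (fun _ => c).
Proof. intros x _; apply filterlim_const. Qed.

Lemma cont_on_plus a b F G : cont_on a b F -> cont_on a b G -> cont_on a b (fun x => F x + G x).
Proof.
  intros HF HG x Hx; eapply filterlim_comp_2; [apply HF, Hx | apply HG, Hx |].
  apply (filterlim_plus (K := R_AbsRing) (V := R_NormedModule)).
Qed.

Lemma cont_on_mult a b F G : cont_on a b F -> cont_on a b G -> cont_on a b (fun x => F x * G x).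
Proof.
  intros HF HG x Hx; eapply filterlim_comp_2; [apply HF, Hx | apply HG, Hx |].
  apply (filterlim_mult (K := R_AbsRing)).
Qed.

Lemma cont_on_minus a b F G : cont_on a b F -> cont_on a b G -> cont_on a b (fun x => F x - G x).
Proof.
  intros HF HG. apply (cont_on_ext a b (fun x => F x + -1 * G x)); [intros; ring|].
  apply cont_on_plus, cont_on_mult, HG; [exact HF | apply cont_on_const].
Qed.

Lemma cont_on_abs a b F : cont_on a b F -> cont_on a b (fun x => Rabs (F x)).
Proof. intros HF x Hx; eapply filterlim_comp; [apply HF, Hx | apply continuous_Rabs]. Qed.

Lemma RInt_clamp a b (F : R -> R) : a <= b -> RInt F a b = RInt (fun y => F (clamp a b y)) a b.
Proof.
  intros Hab; apply RInt_ext; intros x Hx.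
  rewrite Rmin_left, Rmax_right in Hx by lra; rewrite clamp_id; [|unfold Icc]; lra.
Qed.

Lemma ex_RInt_cont_on a b (F : R -> R) : a <= b -> cont_on a b F -> ex_RInt F a b.
Proof.
  intros Hab HF; apply ex_RInt_ext with (fun y => F (clamp a b y)).
  - intros x Hx; rewrite Rmin_left, Rmax_right in Hx by lra; rewrite clamp_id; [|unfold Icc]; lra.
  - apply (ex_RInt_continuous (V := R_CompleteNormedModule)); intros; apply cont_on_clamp; auto.
Qed.

Lemma deriv_on_quotient a b F G x : deriv_on a b F G -> Icc a b x -> forall e : posreal,
  exists d : posreal, forall y, Icc a b y -> y <> x -> Rabs (y - x) < d ->
    Rabs ((F y - F x) / (y - x) - G x) < e.
Proof.
  intros HF Hx e; destruct (HF x Hx _ (locally_ball (G x) e)) as [d Hd].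
  exists d; intros y Iy Hne Hy; apply Hd; [apply ball_Rabs, Hy | split; assumption].
Qed.

Lemma deriv_on_cont a b F G : deriv_on a b F G -> cont_on a b F.
Proof.
  intros HF x Hx P [e He].
  destruct (deriv_on_quotient a b F G x HF Hx (mkposreal 1 Rlt_0_1)) as [d Hd].
  assert (HM : 0 < Rabs (G x) + 1) by (pose proof (Rabs_pos (G x)); lra).
  assert (Hde : 0 < Rmin d (e / (Rabs (G x) + 1))) by (apply Rmin_pos; [apply cond_pos|];
    apply Rdiv_lt_0_compat; [apply cond_pos | exact HM]).
  exists (mkposreal _ Hde); intros y Hy Iy; apply He, ball_Rabs; apply ball_Rabs in Hy; simpl in Hy.
  destruct (Req_dec y x) as [->|Hne]; [rewrite Rminus_eq_0, Rabs_R0; apply cond_pos|].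
  assert (Hq := Hd y Iy Hne (Rlt_le_trans _ _ _ Hy (Rmin_l _ _))); simpl in Hq.
  assert (Hbound : Rabs ((F y - F x) / (y - x)) < Rabs (G x) + 1).
  { replace ((F y - F x) / (y - x)) with ((F y - F x) / (y - x) - G x + G x) by ring.
    eapply Rle_lt_trans; [apply Rabs_triang | lra]. }
  replace (F y - F x) with ((F y - F x) / (y - x) * (y - x)) by (field; lra).
  rewrite Rabs_mult; apply Rlt_le_trans with ((Rabs (G x) + 1) * (e / (Rabs (G x) + 1))).
  - apply Rmult_le_0_lt_compat; try apply Rabs_pos; [exact Hbound|].
    exact (Rlt_le_trans _ _ _ Hy (Rmin_r _ _)).
  - right; field; lra.
Qed.

Lemma deriv_on_interior a b F G x : deriv_on a b F G -> a < x < b -> is_derive F x (G x).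
Proof.
  intros HF Hx; apply is_derive_Reals; intros e He.
  destruct (deriv_on_quotient a b F G x HF ltac:(unfold Icc; lra) (mkposreal e He)) as [d Hd].
  assert (Hp : 0 < Rmin d (Rmin (x - a) (b - x))) by (repeat apply Rmin_pos; try apply cond_pos; lra).
  exists (mkposreal _ Hp); intros h Hh0 Hh; simpl in Hh.
  pose proof (Rmin_l d (Rmin (x - a) (b - x))); pose proof (Rmin_r d (Rmin (x - a) (b - x))).
  pose proof (Rmin_l (x - a) (b - x)); pose proof (Rmin_r (x - a) (b - x)).
  assert (Iy : Icc a b (x + h)) by (unfold Icc, Rabs in *; destruct Rcase_abs; lra).
  specialize (Hd (x + h) Iy ltac:(lra)); replace (x + h - x) with h in Hd by ring; apply Hd; lra.
Qed.

Lemma is_derive_deriv_on a b F G :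
  (forall x, Icc a b x -> is_derive F x (G x)) -> deriv_on a b F G.
Proof.
  intros HF x Hx P [e He].
  destruct (proj1 (is_derive_Reals F x (G x)) (HF x Hx) e (cond_pos e)) as [d Hd].
  exists d; intros y Hy [_ Hne]; change R in y; apply He, ball_Rabs.
  specialize (Hd (y - x) ltac:(intro; apply Hne; lra)); replace (x + (y - x)) with y in Hd by ring.
  apply Hd, Hy.
Qed.

Lemma is_derive_RInt_continuous (g : R -> R) c x : (forall y, continuous g y) ->
  is_derive (fun y => RInt g c y) x (g x).
Proof.
  intros Hg; apply (is_derive_RInt (V := R_NormedModule) g _ c); [|apply Hg].
  exists (mkposreal 1 Rlt_0_1); intros y _.
  apply (RInt_correct (V := R_CompleteNormedModule)), (ex_RInt_continuous (V := R_CompleteNormedModule)).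
  intros; apply Hg.
Qed.

(* The mean value theorem applied to [F - int_a G], both extended continuously outside [a, b]. *)
Lemma RInt_deriv_interior a b F G : a < b -> cont_on a b F -> cont_on a b G ->
  (forall x, a < x < b -> is_derive F x (G x)) -> RInt G a b = F b - F a :> R.
Proof.
  intros Hab HF HG Hd.
  set (Gc := fun y => G (clamp a b y)).
  assert (cGc : forall x, continuous Gc x) by (intro; apply cont_on_clamp; auto; lra).
  set (K := fun x => F (clamp a b x) - RInt Gc a x).
  destruct (MVT_gen K a b (fun _ => 0)) as [c [_ Hc]].
  - intros x Hx; rewrite Rmin_left, Rmax_right in Hx by lra.
    replace 0 with (G x - Gc x) by (unfold Gc; rewrite clamp_id; [ring | unfold Icc; lra]).
    apply (is_derive_minus (V := R_NormedModule)); [|apply is_derive_RInt_continuous, cGc].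
    apply is_derive_ext_loc with F; [|apply Hd, Hx].
    assert (Hp : 0 < Rmin (x - a) (b - x)) by (apply Rmin_pos; lra).
    exists (mkposreal _ Hp); intros y Hy; change (Rabs (y - x) < Rmin (x - a) (b - x)) in Hy.
    pose proof (Rmin_l (x - a) (b - x)); pose proof (Rmin_r (x - a) (b - x)).
    rewrite clamp_id; [reflexivity|]; unfold Icc, Rabs in *; destruct Rcase_abs; lra.
  - intros x _; apply continuity_pt_filterlim.
    apply (continuous_minus (V := R_NormedModule)); [apply cont_on_clamp; auto; lra|].
    apply (ex_derive_continuous (V := R_NormedModule)); eexists; apply is_derive_RInt_continuous, cGc.
  - unfold K in Hc; rewrite !clamp_id in Hc by (unfold Icc; lra).
    rewrite RInt_point in Hc; rewrite (RInt_clamp a b G) by lra; fold Gc.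
    change (@zero R_CompleteNormedModule) with 0 in Hc; lra.
Qed.

(** * Iterated integration by parts *)

Lemma sum_range_S m g : sum_range (S m) g = sum_range m g + g m.
Proof.
  unfold sum_range; rewrite seq_S, map_app, fold_right_app; simpl.
  induction (map g (seq 0 m)) as [|r l IH]; simpl; [ring | rewrite IH; ring].
Qed.

Lemma sum_range_ext m g h : (forall j, (j < m)%nat -> g j = h j) -> sum_range m g = sum_range m h.
Proof.
  induction m as [|m IH]; intros E; [reflexivity|].
  rewrite !sum_range_S, E by lia; rewrite IH; [reflexivity|]; intros; apply E; lia.
Qed.

Lemma sum_range_scal m c g : sum_range m (fun j => c * g j) = c * sum_range m g.
Proof. induction m as [|m IH]; [unfold sum_range; simpl; ring | rewrite !sum_range_S, IH; ring]. Qed.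

Lemma sum_range_zero m g : (forall j, (j < m)%nat -> g j = 0) -> sum_range m g = 0.
Proof. intros E; rewrite (sum_range_ext m g (fun _ => 0 * 0)), sum_range_scal by (intros; rewrite E; auto; ring); ring. Qed.

Lemma RInt_plus_R (f g : R -> R) a b : ex_RInt f a b -> ex_RInt g a b ->
  RInt (fun x => f x + g x) a b = RInt f a b + RInt g a b :> R.
Proof. apply (RInt_plus (V := R_CompleteNormedModule)). Qed.

Lemma RInt_minus_R (f g : R -> R) a b : ex_RInt f a b -> ex_RInt g a b ->
  RInt (fun x => f x - g x) a b = RInt f a b - RInt g a b :> R.
Proof. apply (RInt_minus (V := R_CompleteNormedModule)). Qed.

Lemma RInt_scal_R (f : R -> R) c a b : ex_RInt f a b ->
  RInt (fun x => c * f x) a b = c * RInt f a b :> R.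
Proof. exact (RInt_scal (V := R_CompleteNormedModule) f a b c). Qed.

Lemma RInt_const_R c a b : RInt (fun _ => c) a b = (b - a) * c :> R.
Proof. exact (RInt_const (V := R_CompleteNormedModule) a b c). Qed.

Lemma RInt_ext_open (f g : R -> R) a b : a <= b -> (forall x, a < x < b -> f x = g x) ->
  RInt f a b = RInt g a b.
Proof. intros Hab E; apply RInt_ext; intros x; rewrite Rmin_left, Rmax_right by lra; apply E. Qed.

Section IteratedParts.

Variables (a b : R) (N : nat) (D V : nat -> R -> R).
Hypothesis hab : a < b.
Hypothesis HD : forall k, (k < N)%nat -> deriv_on a b (D k) (D (S k)).
Hypothesis HDN : cont_on a b (D N).
Hypothesis HV : forall j, (j < N)%nat -> forall x, is_derive (V (S j)) x (V j x).
Hypothesis HVc : forall j, (j <= N)%nat -> forall x, continuous (V j) x.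

Lemma cont_on_D k : (k <= N)%nat -> cont_on a b (D k).
Proof.
  intros Hk; destruct (Nat.eq_dec k N) as [->|]; [exact HDN|].
  apply deriv_on_cont with (D (S k)), HD; lia.
Qed.

Lemma cont_on_VD j : (j <= N)%nat -> cont_on a b (fun x => V j x * D j x).
Proof. intros; apply cont_on_mult; [apply continuous_cont_on, HVc | apply cont_on_D]; lia. Qed.

Lemma RInt_parts_step j : (j < N)%nat ->
  RInt (fun x => V j x * D j x) a b =
  (V (S j) b * D j b - V (S j) a * D j a) - RInt (fun x => V (S j) x * D (S j) x) a b :> R.
Proof.
  intros Hj.
  assert (ex : forall i, (i <= N)%nat -> ex_RInt (fun x => V i x * D i x) a b)
    by (intros; apply ex_RInt_cont_on, cont_on_VD; [lra | assumption]).
  rewrite <- (RInt_deriv_interior a b (fun x => V (S j) x * D j x)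
               (fun x => V j x * D j x + V (S j) x * D (S j) x)), RInt_plus_R;
    [lra | apply ex; lia | apply ex; lia | exact hab | | |].
  - apply cont_on_mult; [apply continuous_cont_on, HVc | apply cont_on_D]; lia.
  - apply cont_on_plus; apply cont_on_VD; lia.
  - intros x Hx; apply (is_derive_mult (V (S j)) (D j) x); [apply HV, Hj | | intros; apply Rmult_comm].
    apply deriv_on_interior with a b; [apply HD, Hj | exact Hx].
Qed.

Lemma RInt_parts_iter m : (m <= N)%nat ->
  RInt (fun x => V 0 x * D 0 x) a b =
  sum_range m (fun j => (-1) ^ j * (V (S j) b * D j b - V (S j) a * D j a))
  + (-1) ^ m * RInt (fun x => V m x * D m x) a b :> R.
Proof.
  induction m as [|m IH]; intros Hm; [unfold sum_range; simpl; lra|].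
  rewrite IH by lia; rewrite sum_range_S, RInt_parts_step by lia; simpl; ring.
Qed.

End IteratedParts.

(** * Derivatives of the Chebyshev polynomials of the second kind *)

Lemma nat_ind2 (P : nat -> Prop) : P 0%nat -> P 1%nat ->
  (forall m, P m -> P (S m) -> P (S (S m))) -> forall m, P m.
Proof. intros H0 H1 HS m; enough (P m /\ P (S m)) by tauto; induction m; intuition. Qed.

(* [chebU m j] is the [j]-th derivative of the Chebyshev polynomial [U_m] of the second kind:
   the recurrence is [U_(m+2) = 2 x U_(m+1) - U_m] differentiated [j] times. *)
Fixpoint chebU (m : nat) : nat -> R -> R :=
  match m with
  | O => fun j _ => match j with O => 1 | _ => 0 end
  | S m' => match m' with
    | O => fun j x => match j with O => 2 * x | 1%nat => 2 | _ => 0 end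
    | S m'' => fun j x => 2 * x * chebU m' j x + 2 * INR j * chebU m' (pred j) x - chebU m'' j x
    end
  end.

Lemma chebU_SS m j x :
  chebU (S (S m)) j x = 2 * x * chebU (S m) j x + 2 * INR j * chebU (S m) (pred j) x - chebU m j x.
Proof. reflexivity. Qed.

Lemma is_derive_chebU m j x : is_derive (chebU m j) x (chebU m (S j) x).
Proof.
  revert m j x; apply (nat_ind2 (fun m => forall j x, is_derive (chebU m j) x (chebU m (S j) x))).
  - intros [|j] x; simpl; auto_derive; auto; ring.
  - intros [|[|j]] x; simpl; auto_derive; auto; ring.
  - intros m IH0 IH1 j x.
    eapply is_derive_ext; [intros t; symmetry; apply chebU_SS|].
    assert (H := is_derive_minus _ _ x _ _
      (is_derive_plus _ _ x _ _
        (is_derive_mult (fun y => 2 * y) (chebU (S m) j) x 2 _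
           ltac:(auto_derive; auto; ring) (IH1 j x) Rmult_comm)
        (is_derive_scal (chebU (S m) (pred j)) x (2 * INR j) _ (IH1 (pred j) x)))
      (IH0 j x)).
    replace (chebU (S (S m)) (S j) x) with
      (minus (plus (plus (mult 2 (chebU (S m) j x)) (mult (2 * x) (chebU (S m) (S j) x)))
                   (scal (2 * INR j) (chebU (S m) (S (pred j)) x)))
             (chebU m (S j) x)); [exact H|].
    rewrite chebU_SS; unfold minus, plus, opp, mult, scal; simpl; unfold mult; simpl.
    destruct j as [|j]; simpl pred; [simpl; ring | rewrite S_INR; ring].
Qed.

Lemma chebU_above_degree m j x : (m < j)%nat -> chebU m j x = 0.
Proof.
  revert m j; apply (nat_ind2 (fun m => forall j, (m < j)%nat -> chebU m j x = 0)).
  - intros [|j] Hj; [lia | reflexivity].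
  - intros [|[|j]] Hj; [lia | lia | reflexivity].
  - intros m IH0 IH1 [|j] Hj; [lia|].
    rewrite chebU_SS, IH0, !IH1 by (simpl; lia); ring.
Qed.

Lemma chebU_diag m x : chebU m m x = 2 ^ m * INR (fact m).
Proof.
  revert m; apply (nat_ind2 (fun m => chebU m m x = 2 ^ m * INR (fact m))); [simpl; ring | simpl; ring|].
  intros m _ IH1; rewrite chebU_SS, (chebU_above_degree (S m)), (chebU_above_degree m) by lia.
  simpl pred; rewrite IH1; change (fact (S (S m))) with (S (S m) * fact (S m))%nat.
  rewrite mult_INR; simpl pow; rewrite !S_INR; ring.
Qed.

Lemma chebU_opp m j x : chebU m j (- x) = (-1) ^ (m + j) * chebU m j x.
Proof.
  revert m j; apply (nat_ind2 (fun m => forall j, chebU m j (- x) = (-1) ^ (m + j) * chebU m j x)).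
  - intros [|j]; simpl; ring.
  - intros [|[|j]]; simpl; ring.
  - intros m IH0 IH1 j; rewrite !chebU_SS, IH0, !IH1.
    replace (S (S m) + j)%nat with (S (S (m + j))) by lia.
    replace (S m + j)%nat with (S (m + j)) by lia.
    destruct j as [|j]; simpl pred.
    + rewrite Nat.add_0_r; simpl; ring.
    + replace (S m + j)%nat with (m + S j)%nat by lia; simpl; ring.
Qed.

Lemma chebU_cos m t : chebU m 0 (cos t) * sin t = sin (INR (S m) * t).
Proof.
  revert m; apply (nat_ind2 (fun m => chebU m 0 (cos t) * sin t = sin (INR (S m) * t))).
  - simpl; ring_simplify (1 * t); ring.
  - replace (INR 2 * t) with (2 * t) by (simpl; ring); rewrite sin_2a; simpl; ring.
  - intros m IH0 IH1; rewrite chebU_SS; simpl pred; simpl INR at 1.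
    transitivity (2 * cos t * (chebU (S m) 0 (cos t) * sin t) - chebU m 0 (cos t) * sin t); [ring|].
    rewrite IH0, IH1, !S_INR.
    replace ((INR m + 1 + 1 + 1) * t) with ((INR m + 1 + 1) * t + t) by ring.
    replace ((INR m + 1) * t) with ((INR m + 1 + 1) * t - t) by ring.
    rewrite sin_plus, sin_minus; ring.
Qed.

Fixpoint binom (N k : nat) : R :=
  match N, k with
  | O, O => 1
  | O, S _ => 0
  | S _, O => 1
  | S N', S k' => binom N' k' + binom N' (S k')
  end.

Lemma binom_above N k : (N < k)%nat -> binom N k = 0.
Proof.
  revert k; induction N as [|N IH]; intros [|k] Hk; try lia; [reflexivity|].
  simpl; rewrite !IH by lia; ring.
Qed.

Lemma binom_1 N : binom N 1 = INR N.
Proof. induction N as [|N IH]; [reflexivity|]; simpl; rewrite IH; destruct N; simpl; ring. Qed.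

Lemma binom_fact N k : (k <= N)%nat -> binom N k = INR (fact N) / (INR (fact k) * INR (fact (N - k))).
Proof.
  revert k; induction N as [|N IH]; intros [|k] Hk; try lia.
  - simpl; field.
  - rewrite Nat.sub_0_r; change (binom (S N) 0) with 1; change (fact 0) with 1%nat; simpl (INR 1); field; apply INR_fact_neq_0.
  - simpl binom; destruct (Nat.eq_dec k N) as [->|Hne].
    + rewrite (binom_above N (S N)), IH, Nat.sub_diag, Nat.sub_diag by lia.
      simpl (fact 0); field; repeat split; first [apply INR_fact_neq_0 | simpl; lra].
    + rewrite !IH by lia.
      replace (S N - S k)%nat with (S (N - S k)) by lia; replace (N - k)%nat with (S (N - S k)) by lia.
      change (fact (S N)) with (S N * fact N)%nat; change (fact (S k)) with (S k * fact k)%nat.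
      change (fact (S (N - S k))) with (S (N - S k) * fact (N - S k))%nat.
      rewrite !mult_INR; replace (INR (S N)) with (INR (S k) + INR (S (N - S k)))
        by (rewrite <- plus_INR; f_equal; lia).
      field; repeat split; try apply INR_fact_neq_0; apply not_0_INR; lia.
Qed.

Lemma chebU_one m j : chebU m j 1 = 2 ^ j * INR (fact j) * binom (m + j + 1) (2 * j + 1).
Proof.
  revert m j; apply (nat_ind2
    (fun m => forall j, chebU m j 1 = 2 ^ j * INR (fact j) * binom (m + j + 1) (2 * j + 1))).
  - intros [|j]; [simpl; ring | simpl chebU; rewrite binom_above by lia; ring].
  - intros [|[|j]]; [simpl; ring | simpl; ring | simpl chebU; rewrite binom_above by lia; ring].
  - intros m IH0 IH1 [|j]; rewrite chebU_SS, IH0, IH1; simpl pred.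
    + rewrite !Nat.add_0_r, !binom_1, !plus_INR, !S_INR; simpl; ring.
    + rewrite IH1.
      replace (S (S m) + S j + 1)%nat with (S (S (S (m + j + 1)))) by lia.
      replace (S m + S j + 1)%nat with (S (S (m + j + 1))) by lia.
      replace (m + S j + 1)%nat with (S (m + j + 1)) by lia.
      replace (S m + j + 1)%nat with (S (m + j + 1)) by lia.
      replace (2 * S j + 1)%nat with (S (S (S (2 * j)))) by lia.
      replace (2 * j + 1)%nat with (S (2 * j)) by lia.
      change (fact (S j)) with (S j * fact j)%nat; rewrite mult_INR.
      simpl binom; simpl pow; ring.
Qed.

Lemma cos_INR_PI m : cos (INR m * PI) = (-1) ^ m.
Proof.
  induction m as [|m IH]; [simpl; rewrite Rmult_0_l; apply cos_0|].
  rewrite S_INR, Rmult_plus_distr_r, Rmult_1_l, cos_plus, cos_PI, sin_PI, IH; simpl; ring.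
Qed.

Lemma sin_INR_PI m : sin (INR m * PI) = 0.
Proof.
  induction m as [|m IH]; [simpl; rewrite Rmult_0_l; apply sin_0|].
  rewrite S_INR, Rmult_plus_distr_r, Rmult_1_l, sin_plus, cos_PI, sin_PI, IH; ring.
Qed.

Lemma pow_m1_sqr m : (-1) ^ m * (-1) ^ m = 1.
Proof. rewrite <- pow_add; replace (m + m)%nat with (2 * m)%nat by lia; apply pow_1_even. Qed.

Lemma is_RInt_sin_mul (n : nat) (c u v : R) : INR n <> 0 ->
  is_RInt (fun t => c * sin (INR n * t)) u v (c * (cos (INR n * u) - cos (INR n * v)) / INR n).
Proof.
  intros Hn.
  replace (c * (cos (INR n * u) - cos (INR n * v)) / INR n)
    with (minus (- c * cos (INR n * v) / INR n) (- c * cos (INR n * u) / INR n))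
    by (unfold minus, plus, opp; simpl; field; exact Hn).
  apply (is_RInt_derive (fun t => - c * cos (INR n * t) / INR n)).
  - intros x _; auto_derive; [exact I | field; exact Hn].
  - intros x _; apply (ex_derive_continuous (V := R_NormedModule)); auto_derive; exact I.
Qed.

Lemma is_RInt_sin_0_PI n : (1 <= n)%nat ->
  is_RInt (fun t => sin (INR n * t)) 0 PI ((1 - (-1) ^ n) / INR n).
Proof.
  intros Hn; assert (Hn0 : INR n <> 0) by (apply not_0_INR; lia).
  eapply is_RInt_ext; [intros; apply Rmult_1_l|].
  replace ((1 - (-1) ^ n) / INR n) with (1 * (cos (INR n * 0) - cos (INR n * PI)) / INR n)
    by (rewrite Rmult_0_r, cos_0, Rmult_comm, cos_INR_PI; field; exact Hn0).
  apply is_RInt_sin_mul, Hn0.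
Qed.

(* On the [m]-th hump of [sin (n t)], [|sin (n t)| = (-1)^m sin (n t)]. *)
Lemma is_RInt_abs_sin_hump n m : (1 <= n)%nat ->
  is_RInt (fun t => Rabs (sin (INR n * t))) (INR m * PI / INR n) (INR (S m) * PI / INR n) (2 / INR n).
Proof.
  intros Hn; assert (Hn0 : 0 < INR n) by (apply lt_0_INR; lia).
  assert (Hnt : forall k, INR n * (INR k * PI / INR n) = INR k * PI) by (intros; field; lra).
  apply is_RInt_ext with (fun t => (-1) ^ m * sin (INR n * t)).
  - intros x Hx; enough (E : (-1) ^ m * sin (INR n * x) = Rabs (sin (INR n * x))) by exact E.
    assert (Hle : INR m * PI / INR n <= INR (S m) * PI / INR n).
    { apply Rmult_le_compat_r; [left; apply Rinv_0_lt_compat, Hn0|].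
      apply Rmult_le_compat_r; [left; apply PI_RGT_0 | rewrite S_INR; lra]. }
    rewrite Rmin_left, Rmax_right in Hx by exact Hle.
    set (u := INR n * x - INR m * PI).
    assert (Hu : 0 < u < PI).
    { destruct Hx as [H1 H2]; apply (Rmult_lt_compat_l (INR n)) in H1, H2; try exact Hn0.
      rewrite Hnt in H1, H2; rewrite S_INR in H2; unfold u; lra. }
    replace (INR n * x) with (u + INR m * PI) by (unfold u; ring).
    rewrite sin_plus, sin_INR_PI, cos_INR_PI, Rmult_0_r, Rplus_0_r, Rabs_mult, pow_1_abs.
    rewrite Rabs_right by (left; apply sin_gt_0; lra).
    transitivity (sin u * ((-1) ^ m * (-1) ^ m)); [ring | rewrite pow_m1_sqr; ring].
  - replace (2 / INR n) with ((-1) ^ m * (cos (INR n * (INR m * PI / INR n))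
        - cos (INR n * (INR (S m) * PI / INR n))) / INR n).
    + apply is_RInt_sin_mul; lra.
    + rewrite !Hnt, !cos_INR_PI; simpl pow.
      assert (Hp := pow_m1_sqr m); set (p := (-1) ^ m) in *.
      replace (p * (p - -1 * p)) with (2 * (p * p)) by ring; rewrite Hp; field; lra.
Qed.

Lemma is_RInt_abs_sin_0_PI n : (1 <= n)%nat -> is_RInt (fun t => Rabs (sin (INR n * t))) 0 PI 2.
Proof.
  intros Hn; assert (Hn0 : INR n <> 0) by (apply not_0_INR; lia).
  assert (Hhumps : forall m, is_RInt (fun t => Rabs (sin (INR n * t))) 0 (INR m * PI / INR n)
                               (2 * INR m / INR n)).
  { induction m as [|m IH].
    - replace (INR 0 * PI / INR n) with 0 by (simpl; field; exact Hn0).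
      replace (2 * INR 0 / INR n) with (@zero R_NormedModule) by (unfold zero; simpl; field; exact Hn0).
      apply is_RInt_point.
    - replace (2 * INR (S m) / INR n) with (plus (2 * INR m / INR n) (2 / INR n))
        by (rewrite S_INR; unfold plus; simpl; field; exact Hn0).
      apply (is_RInt_Chasles (V := R_NormedModule)) with (INR m * PI / INR n);
        [exact IH | apply is_RInt_abs_sin_hump, Hn]. }
  specialize (Hhumps n).
  replace (INR n * PI / INR n) with PI in Hhumps by (field; exact Hn0).
  replace (2 * INR n / INR n) with 2 in Hhumps by (field; exact Hn0).
  exact Hhumps.
Qed.

Lemma RInt_cos_subst (f : R -> R) a b : a < b -> (forall x, continuous f x) ->
  RInt f a b = (b - a) / 2 * RInt (fun th => sin th * f ((a + b) / 2 + (b - a) / 2 * cos th)) 0 PI :> R.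
Proof.
  intros Hab Hf.
  set (g := fun th => (a + b) / 2 + (b - a) / 2 * cos th).
  assert (Hg : forall th, is_derive g th (- ((b - a) / 2) * sin th))
    by (intros; unfold g; auto_derive; [exact I | ring]).
  assert (Hsub := is_RInt_comp f g (fun th => - ((b - a) / 2) * sin th) 0 PI
    (fun _ _ => Hf _) (fun th _ => conj (Hg th) (continuous_mult (K := R_AbsRing) _ _ _
       (continuous_const _ _) (continuous_sin th)))).
  replace (g 0) with b in Hsub by (unfold g; rewrite cos_0; field).
  replace (g PI) with a in Hsub by (unfold g; rewrite cos_PI; field).
  assert (cfg : forall th, continuous (fun th => f (g th)) th)
    by (intros; apply (continuous_comp g f); [apply (ex_derive_continuous (V := R_NormedModule));
        eexists; apply Hg | apply Hf]).
  assert (exf : ex_RInt f b a)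
    by (apply (ex_RInt_continuous (V := R_CompleteNormedModule)); intros; apply Hf).
  rewrite <- (opp_RInt_swap f b a exf), <- (is_RInt_unique _ _ _ _ Hsub).
  rewrite (RInt_ext _ (fun th => - ((b - a) / 2) * (sin th * f (g th))))
    by (intros; unfold scal; simpl; unfold mult; simpl; ring).
  rewrite RInt_scal_R; [unfold opp, g; simpl; ring|].
  apply (ex_RInt_continuous (V := R_CompleteNormedModule)); intros.
  apply (continuous_mult (K := R_AbsRing)); [apply continuous_sin | apply cfg].
Qed.

(** * The Peano kernel *)

Definition to_unit (a b t : R) : R := (2 * t - a - b) / (b - a).

Definition kernel_scale (n : nat) (a b : R) : R :=
  (b - a) ^ (n - 1) / (4 ^ (n - 1) * INR (fact (n - 1))).

(* [kernel n a b j] is the W_j of the sketch above. *)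
Definition kernel (n : nat) (a b : R) (j : nat) (t : R) : R :=
  kernel_scale n a b * (2 / (b - a)) ^ (n - 1 - j) * chebU (n - 1) (n - 1 - j) (to_unit a b t).

Section Kernel.

Variables (n : nat) (a b : R).
Hypothesis hab : a < b.

Lemma is_derive_kernel_chebU j t :
  is_derive (kernel n a b j) t
    (kernel_scale n a b * (2 / (b - a)) ^ (n - 1 - j) *
     (2 / (b - a) * chebU (n - 1) (S (n - 1 - j)) (to_unit a b t))).
Proof.
  apply is_derive_scal, (is_derive_comp (chebU (n - 1) (n - 1 - j)) (to_unit a b));
    [apply is_derive_chebU | unfold to_unit; auto_derive; [exact I | field; lra]].
Qed.

Lemma is_derive_kernel j t : (j < n - 1)%nat -> is_derive (kernel n a b (S j)) t (kernel n a b j t).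
Proof.
  intros Hj; replace (kernel n a b j t) with
    (kernel_scale n a b * (2 / (b - a)) ^ (n - 1 - S j) *
     (2 / (b - a) * chebU (n - 1) (S (n - 1 - S j)) (to_unit a b t)));
    [apply is_derive_kernel_chebU|].
  unfold kernel; replace (n - 1 - j)%nat with (S (n - 1 - S j)) by lia; simpl pow; ring.
Qed.

Lemma continuous_kernel j t : continuous (kernel n a b j) t.
Proof. apply (ex_derive_continuous (V := R_NormedModule)); eexists; apply is_derive_kernel_chebU. Qed.

Lemma kernel_scale_pos : 0 < kernel_scale n a b.
Proof.
  apply Rdiv_lt_0_compat; [apply pow_lt; lra|].
  apply Rmult_lt_0_compat; [apply pow_lt; lra | apply lt_0_INR, lt_O_fact].
Qed.

Lemma kernel_0 t : kernel n a b 0 t = 1.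
Proof.
  unfold kernel, kernel_scale; rewrite Nat.sub_0_r, chebU_diag; unfold Rdiv.
  rewrite Rpow_mult_distr, pow_inv; replace 4 with (2 * 2) by ring; rewrite Rpow_mult_distr.
  assert (0 < (b - a) ^ (n - 1)) by (apply pow_lt; lra).
  assert (0 < 2 ^ (n - 1)) by (apply pow_lt; lra).
  field; repeat split; try lra; apply INR_fact_neq_0.
Qed.

Lemma kernel_last t : kernel n a b (n - 1) t = kernel_scale n a b * chebU (n - 1) 0 (to_unit a b t).
Proof. unfold kernel; rewrite Nat.sub_diag; simpl; ring. Qed.

Lemma kernel_at_a j : (j <= n - 1)%nat -> kernel n a b j a = (-1) ^ j * kernel n a b j b.
Proof.
  intros Hj; unfold kernel.
  replace (to_unit a b a) with (- to_unit a b b) by (unfold to_unit; field; lra).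
  rewrite chebU_opp.
  replace (n - 1 + (n - 1 - j))%nat with (j + 2 * (n - 1 - j))%nat by lia.
  rewrite pow_add, pow_1_even; ring.
Qed.

Lemma kernel_at_b j : (j < n - 1)%nat -> kernel n a b (S j) b = coef n a b j / INR (fact (n - 1)).
Proof.
  intros Hj; unfold kernel, coef, kernel_scale.
  replace (to_unit a b b) with 1 by (unfold to_unit; field; lra).
  rewrite chebU_one, binom_fact by lia.
  set (i := (n - 1 - S j)%nat).
  assert (Hn : n = S (S (j + i))) by (unfold i; lia).
  replace (n - 1 + i + 1 - (2 * i + 1))%nat with (S j) by lia.
  replace (n - 1 + i + 1)%nat with (2 * n - j - 2)%nat by lia.
  replace (n - j - 1)%nat with (S i) by lia.
  replace (2 * n - 2 * j - 2)%nat with (S (2 * i + 1)) by lia.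
  replace (n - 1)%nat with (S j + i)%nat by lia.
  replace (j + 1)%nat with (S j) by lia.
  change (fact (S (2 * i + 1))) with (S (2 * i + 1) * fact (2 * i + 1))%nat.
  change (fact (S i)) with (S i * fact i)%nat.
  rewrite !mult_INR.
  replace (INR (S (2 * i + 1))) with (2 * INR (S i)) by (rewrite !S_INR, plus_INR, mult_INR; simpl; ring).
  assert (0 < (b - a) ^ i) by (apply pow_lt; lra).
  assert (0 < (b - a) ^ S j) by (apply pow_lt; lra).
  assert (0 < 2 ^ i) by (apply pow_lt; lra).
  assert (0 < 2 ^ S j) by (apply pow_lt; lra).
  assert (INR (S i) <> 0) by (apply not_0_INR; lia).
  rewrite (pow_add (b - a)), (pow_add 4).
  replace (4 ^ S j) with (2 ^ S j * 2 ^ S j) by (rewrite <- Rpow_mult_distr; f_equal; ring).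
  replace (4 ^ i) with (2 ^ i * 2 ^ i) by (rewrite <- Rpow_mult_distr; f_equal; ring).
  replace (2 ^ (2 * j + 1)) with (2 ^ S j * 2 ^ S j / 2)
    by (rewrite <- pow_add; replace (S j + S j)%nat with (S (2 * j + 1)) by lia; simpl; field).
  unfold Rdiv; rewrite Rpow_mult_distr, pow_inv.
  field; repeat split; try lra; apply INR_fact_neq_0.
Qed.

End Kernel.

Section KernelIntegrals.

Variables (n : nat) (a b : R).
Hypothesis hn : (1 <= n)%nat.
Hypothesis hab : a < b.

(* Under [t = (a + b)/2 + (b - a)/2 cos th] the last kernel becomes [kernel_scale * sin (n th) / sin th]. *)
Lemma RInt_kernel_last_homogeneous (phi : R -> R) :
  (forall x, continuous phi x) -> (forall c x, 0 <= c -> phi (c * x) = c * phi x) ->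
  RInt (fun t => phi (kernel n a b (n - 1) t)) a b =
  (b - a) / 2 * kernel_scale n a b * RInt (fun th => phi (sin (INR n * th))) 0 PI :> R.
Proof.
  intros Hphi Hhom.
  assert (Hs := kernel_scale_pos n a b hab).
  assert (cphi : forall th, continuous (fun th => phi (sin (INR n * th))) th).
  { intros; apply (continuous_comp (fun th => sin (INR n * th)) phi); [|apply Hphi].
    apply (ex_derive_continuous (V := R_NormedModule)); auto_derive; exact I. }
  rewrite RInt_cos_subst; [| exact hab |
    intros; apply (continuous_comp _ phi); [apply continuous_kernel, hab | apply Hphi]].
  rewrite Rmult_assoc, <- (RInt_scal_R (fun th => phi (sin (INR n * th))) (kernel_scale n a b))
    by (apply (ex_RInt_continuous (V := R_CompleteNormedModule)); intros; apply cphi).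
  f_equal; apply RInt_ext_open; [left; apply PI_RGT_0|]; intros th Hth.
  assert (Hsin : 0 <= sin th) by (left; apply sin_gt_0; lra).
  rewrite kernel_last, <- Hhom, <- Hhom by (exact Hsin || lra).
  f_equal; replace (INR n) with (INR (S (n - 1))) by (f_equal; lia).
  rewrite <- chebU_cos; unfold to_unit.
  replace ((2 * ((a + b) / 2 + (b - a) / 2 * cos th) - a - b) / (b - a)) with (cos th)
    by (field; lra); ring.
Qed.

Lemma RInt_kernel_last :
  RInt (kernel n a b (n - 1)) a b = (b - a) / 2 * kernel_scale n a b * ((1 - (-1) ^ n) / INR n) :> R.
Proof.
  rewrite <- (is_RInt_unique _ _ _ _ (is_RInt_sin_0_PI n hn)).
  apply (RInt_kernel_last_homogeneous (fun x => x)); [intros; apply continuous_id | reflexivity].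
Qed.

Lemma RInt_abs_kernel_last : RInt (fun t => Rabs (kernel n a b (n - 1) t)) a b = Kn n a b :> R.
Proof.
  rewrite (RInt_kernel_last_homogeneous Rabs), (is_RInt_unique _ _ _ _ (is_RInt_abs_sin_0_PI n hn));
    [| apply continuous_Rabs | intros c x Hc; rewrite Rabs_mult, Rabs_right by lra; reflexivity].
  unfold Kn, kernel_scale; replace (2 * n - 2)%nat with (2 * (n - 1))%nat by lia.
  rewrite pow_mult; replace (2 ^ 2) with 4 by (simpl; ring).
  replace ((b - a) ^ n) with ((b - a) * (b - a) ^ (n - 1))
    by (rewrite tech_pow_Rmult; f_equal; lia).
  field; split; [apply pow_nonzero; lra | apply INR_fact_neq_0].
Qed.

End KernelIntegrals.

Lemma cont_on_bounded a b G : a <= b -> cont_on a b G -> exists B, forall x, Icc a b x -> Rabs (G x) <= B.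
Proof.
  intros Hab HG.
  destruct (continuity_ab_maj (fun x => Rabs (G (clamp a b x))) a b Hab) as [xm [Hm _]].
  - intros c _; apply continuity_pt_filterlim, (continuous_comp (fun x => G (clamp a b x)) Rabs);
      [apply cont_on_clamp; assumption | apply continuous_Rabs].
  - exists (Rabs (G (clamp a b xm))); intros x Hx; specialize (Hm x Hx); rewrite clamp_id in Hm; assumption.
Qed.

Lemma sup_norm_spec a b G : a <= b -> cont_on a b G ->
  (forall x, Icc a b x -> Rabs (G x) <= sup_norm a b G) /\
  (forall M, (forall x, Icc a b x -> Rabs (G x) <= M) -> sup_norm a b G <= M).
Proof.
  intros Hab HG; destruct (cont_on_bounded a b G Hab HG) as [B HB].
  unfold sup_norm; set (E := fun y => exists x, Icc a b x /\ y = Rabs (G x)).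
  destruct (Lub_Rbar_correct E) as [Hub Hlub].
  destruct (Lub_Rbar E) as [l| |] eqn:El; simpl.
  - split; [intros x Hx; apply (Hub _ (ex_intro _ x (conj Hx eq_refl))) |].
    intros M HM; apply (Hlub (Finite M)); intros y [x [Hx ->]]; apply HM, Hx.
  - exfalso; apply (Hlub (Finite B)); intros y [x [Hx ->]]; apply HB, Hx.
  - exfalso; apply (Hub (Rabs (G a))); exists a; split; [unfold Icc; lra | reflexivity].
Qed.

Lemma RInt_mul_sub_const (V F : R -> R) c a b : a <= b -> cont_on a b V -> cont_on a b F ->
  RInt (fun x => V x * F x) a b = RInt (fun x => V x * (F x - c)) a b + c * RInt V a b :> R.
Proof.
  intros Hab HV HF.
  rewrite <- RInt_scal_R, <- RInt_plus_R by
    (apply ex_RInt_cont_on; auto using cont_on_mult, cont_on_minus, cont_on_const).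
  apply RInt_ext_open; [exact Hab | intros; ring].
Qed.

Definition nth_primitive (n : nat) (a : R) (D : nat -> R -> R) (t : R) : R :=
  D (n - 1)%nat t - D (n - 1)%nat a.

Section QuadratureError.

Variables (n : nat) (a b : R) (f : R -> R) (D : nat -> R -> R).
Hypothesis hn : (1 <= n)%nat.
Hypothesis hab : a < b.

Lemma Rterm_kernel : Rterm n a b D = (-1) ^ (n - 1) * D (n - 1)%nat a * RInt (kernel n a b (n - 1)) a b.
Proof.
  rewrite RInt_kernel_last by assumption; unfold Rterm, kernel_scale.
  assert (Hn0 : INR n <> 0) by (apply not_0_INR; lia).
  destruct (Nat.odd n) eqn:Ho.
  - apply Nat.odd_spec in Ho; destruct Ho as [k Hk].
    replace (n - 1)%nat with (2 * k)%nat by lia.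
    replace (2 * n - 2)%nat with (2 * (2 * k))%nat by lia.
    replace n with (S (2 * k)) by lia.
    rewrite pow_1_even, pow_1_odd, pow_mult; replace (2 ^ 2) with 4 by (simpl; ring).
    change (fact (S (2 * k))) with (S (2 * k) * fact (2 * k))%nat; rewrite mult_INR.
    replace n with (S (2 * k)) in Hn0 by lia; simpl pow.
    field; repeat split; first [apply pow_nonzero; lra | apply INR_fact_neq_0 | exact Hn0].
  - assert (He : Nat.even n = true) by (rewrite <- Nat.negb_odd, Ho; reflexivity).
    apply Nat.even_spec in He; destruct He as [k Hk].
    replace ((-1) ^ n) with 1 by (rewrite Hk; symmetry; apply pow_1_even).
    rewrite Rminus_eq_0; unfold Rdiv at 3; rewrite Rmult_0_l, !Rmult_0_r; reflexivity.
Qed.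

Lemma boundary_terms_coef :
  sum_range (n - 1) (fun j => (-1) ^ j * (kernel n a b (S j) b * D j b - kernel n a b (S j) a * D j a))
  = 1 / INR (fact (n - 1)) * sum_range (n - 1) (fun k => coef n a b k * (D k a + (-1) ^ k * D k b)).
Proof.
  rewrite <- sum_range_scal; apply sum_range_ext; intros j Hj.
  rewrite kernel_at_a, kernel_at_b by (assumption || lia); simpl pow.
  assert (Hp := pow_m1_sqr j); set (p := (-1) ^ j) in *.
  assert (INR (fact (n - 1)) <> 0) by apply INR_fact_neq_0.
  transitivity (coef n a b j * ((p * p) * D j a + p * D j b) / INR (fact (n - 1))); [field; assumption|].
  rewrite Hp; field; assumption.
Qed.

Hypothesis hd : derivs_hyp n a b f D.

Lemma cont_on_nth_primitive : cont_on a b (nth_primitive n a D).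
Proof. apply cont_on_minus; [apply (proj2 (proj2 hd)) | apply cont_on_const]. Qed.

Lemma En_kernel :
  En n a b f D = (-1) ^ (n - 1) * RInt (fun t => kernel n a b (n - 1) t * nth_primitive n a D t) a b.
Proof.
  destruct hd as [HD0 [HD HDN]].
  assert (Hparts := RInt_parts_iter a b (n - 1) D (kernel n a b) hab HD HDN
    (fun j Hj x => is_derive_kernel n a b hab j x Hj) (fun j _ x => continuous_kernel n a b hab j x)
    (n - 1) (le_n _)).
  unfold En; rewrite (RInt_ext_open f (fun x => kernel n a b 0 x * D 0%nat x)) by
    (lra || (intros; rewrite kernel_0, HD0 by (assumption || (unfold Icc; lra)); ring)).
  rewrite Hparts, (RInt_mul_sub_const _ _ (D (n - 1)%nat a)) by
    (lra || apply continuous_cont_on, continuous_kernel, hab || assumption).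
  rewrite boundary_terms_coef, Rterm_kernel; unfold nth_primitive; lra.
Qed.

Lemma En_bound : Rabs (En n a b f D) <= alex_norm_deriv n a b D * Kn n a b.
Proof.
  rewrite En_kernel, Rabs_mult, pow_1_abs, Rmult_1_l, <- RInt_abs_kernel_last by assumption.
  change (alex_norm_deriv n a b D) with (sup_norm a b (nth_primitive n a D)).
  assert (cK : cont_on a b (kernel n a b (n - 1))) by apply continuous_cont_on, continuous_kernel, hab.
  assert (cG := cont_on_nth_primitive).
  destruct (sup_norm_spec a b _ (Rlt_le _ _ hab) cG) as [Hsup _].
  eapply Rle_trans; [apply abs_RInt_le; [lra | apply ex_RInt_cont_on, cont_on_mult; auto; lra]|].
  rewrite <- RInt_scal_R by (apply ex_RInt_cont_on, cont_on_abs; auto; lra).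
  apply RInt_le; [lra | apply ex_RInt_cont_on, cont_on_abs, cont_on_mult; auto; lra |
    apply ex_RInt_cont_on, cont_on_mult, cont_on_abs; auto using cont_on_const; lra |].
  intros x Hx; rewrite Rabs_mult, Rmult_comm.
  apply Rmult_le_compat_r; [apply Rabs_pos | apply Hsup; unfold Icc; lra].
Qed.

End QuadratureError.

(** * The n-th derivative lies in A_c *)

Lemma Derive_n_vanishing (psi : R -> R) k x (e : posreal) :
  (forall t, Rabs (t - x) < e -> psi t = 0) -> Derive_n psi k x = 0.
Proof.
  intros H; rewrite (Derive_n_ext_loc psi (fun _ => 0)); [destruct k; [reflexivity | apply Derive_n_const]|].
  exists e; intros t Ht; apply H, Ht.
Qed.

Lemma test_fun_Derive_n_endpoints a b psi k : test_fun a b psi ->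
  Derive_n psi k a = 0 /\ Derive_n psi k b = 0.
Proof.
  intros [_ [c [d [Hac [_ [Hdb Hz]]]]]].
  split; [apply (Derive_n_vanishing psi k a (mkposreal (c - a) ltac:(lra)))
         | apply (Derive_n_vanishing psi k b (mkposreal (b - d) ltac:(lra)))];
    intros t Ht; apply Hz; simpl in Ht; unfold Rabs in Ht; destruct Rcase_abs; lra.
Qed.

Lemma distr_deriv_nth_primitive n a b f D psi : (1 <= n)%nat -> a < b -> derivs_hyp n a b f D ->
  test_fun a b psi -> distr_deriv n a b f psi = - RInt (fun x => nth_primitive n a D x * Derive psi x) a b.
Proof.
  intros hn hab hd Hpsi; assert (Hcont := cont_on_nth_primitive n a b f D hd).
  destruct hd as [HD0 [HD HDN]]; assert (Hder := proj1 Hpsi).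
  set (V := fun j => Derive_n psi (n - j)).
  assert (HV : forall j, (j < n - 1)%nat -> forall x, is_derive (V (S j)) x (V j x)).
  { intros j Hj x; unfold V; replace (n - j)%nat with (S (n - S j)) by lia.
    apply Derive_correct, (Hder (S (n - S j)) x). }
  assert (HVc : forall j, (j <= n - 1)%nat -> forall x, continuous (V j) x)
    by (intros j Hj x; apply (ex_derive_continuous (V := R_NormedModule)), (Hder (S (n - j)) x)).
  assert (Hparts := RInt_parts_iter a b (n - 1) D V hab HD HDN HV HVc (n - 1) (le_n _)).
  rewrite sum_range_zero in Hparts
    by (intros j _; unfold V; rewrite !(proj1 (test_fun_Derive_n_endpoints a b psi _ Hpsi)),
          !(proj2 (test_fun_Derive_n_endpoints a b psi _ Hpsi)); ring).
  assert (HV1 : forall x, V (n - 1)%nat x = Derive psi x)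
    by (intros; unfold V; replace (n - (n - 1))%nat with 1%nat by lia; reflexivity).
  assert (cpsi' : cont_on a b (Derive psi))
    by (apply continuous_cont_on; intros; apply (ex_derive_continuous (V := R_NormedModule)), (Hder 2%nat)).
  assert (Hpsi' : RInt (Derive psi) a b = 0).
  { rewrite (RInt_deriv_interior a b psi (Derive psi)); [| lra | | exact cpsi' |].
    - destruct (test_fun_Derive_n_endpoints a b psi 0 Hpsi) as [Ha Hb]; simpl in Ha, Hb; lra.
    - apply continuous_cont_on; intros; apply (ex_derive_continuous (V := R_NormedModule)), (Hder 1%nat).
    - intros; apply Derive_correct, (Hder 1%nat). }
  unfold distr_deriv.
  rewrite (RInt_ext_open _ (fun x => V 0%nat x * D 0%nat x)) by
    (lra || (intros; unfold V; rewrite Nat.sub_0_r, HD0 by (unfold Icc; lra); ring)).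
  rewrite Hparts, (RInt_ext_open _ (fun x => Derive psi x * D (n - 1)%nat x)) by
    (lra || (intros; rewrite HV1; reflexivity)).
  rewrite (RInt_mul_sub_const _ _ (D (n - 1)%nat a)), Hpsi' by (lra || assumption).
  rewrite (RInt_ext_open _ (fun x => nth_primitive n a D x * Derive psi x))
    by (lra || (intros; unfold nth_primitive; ring)).
  replace n with (S (n - 1)) at 1 by lia; simpl pow.
  assert (Hp := pow_m1_sqr (n - 1)); set (p := (-1) ^ (n - 1)) in *.
  transitivity (- (p * p) * RInt (fun x => nth_primitive n a D x * Derive psi x) a b); [ring|].
  rewrite Hp; ring.
Qed.

Lemma derivs_hyp_in_Ac n a b f D : (1 <= n)%nat -> a < b -> derivs_hyp n a b f D ->
  in_Ac a b (distr_deriv n a b f).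
Proof.
  intros hn hab hd; exists (nth_primitive n a D); split; [|split].
  - apply (cont_on_nth_primitive n a b f D hd).
  - unfold nth_primitive; ring.
  - intros psi Hpsi; apply distr_deriv_nth_primitive; assumption.
Qed.

(** * Sharpness *)

Fixpoint iter_primitive (a : R) (g : R -> R) (m : nat) : R -> R :=
  match m with
  | O => g
  | S m' => fun x => RInt (iter_primitive a g m') a x
  end.

Lemma iter_primitive_spec a (g : R -> R) : (forall x, continuous g x) -> forall m,
  (forall x, continuous (iter_primitive a g m) x) /\
  (forall x, is_derive (iter_primitive a g (S m)) x (iter_primitive a g m x)).
Proof.
  intros Hg; induction m as [|m [Hc _]].
  - split; [exact Hg | intros; apply is_derive_RInt_continuous, Hg].
  - assert (Hc' : forall x, continuous (iter_primitive a g (S m)) x) by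
      (intros; apply (ex_derive_continuous (V := R_NormedModule)); eexists;
       apply is_derive_RInt_continuous, Hc).
    split; [exact Hc' | intros; apply is_derive_RInt_continuous, Hc'].
Qed.

Lemma derivs_hyp_iter_primitive n a b (g : R -> R) : (forall x, continuous g x) ->
  derivs_hyp n a b (iter_primitive a g (n - 1)) (fun k => iter_primitive a g (n - 1 - k)).
Proof.
  intros Hg; split; [|split].
  - intros x _; rewrite Nat.sub_0_r; reflexivity.
  - intros k Hk; apply is_derive_deriv_on; intros x _.
    replace (n - 1 - k)%nat with (S (n - 1 - S k)) by lia; apply (iter_primitive_spec a g Hg).
  - rewrite Nat.sub_diag; apply continuous_cont_on, Hg.
Qed.

Lemma mul_clamp_sign_bounds M w : 0 < M ->
  0 <= w * clamp (-1) 1 (M * w) <= Rabs w /\ Rabs w - 1 / M <= w * clamp (-1) 1 (M * w).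
Proof.
  intros HM; assert (Hi : 1 / M * M = 1) by (field; lra).
  unfold clamp, Rmax, Rmin; repeat destruct Rle_dec; unfold Rabs; destruct Rcase_abs; repeat split; nra.
Qed.

Definition ramp (a d t : R) : R := clamp 0 1 ((t - a) / d).

Lemma ramp_bounds a d t : 0 <= ramp a d t <= 1.
Proof. apply clamp_Icc; lra. Qed.

Lemma continuous_ramp a d t : 0 < d -> continuous (ramp a d) t.
Proof.
  intros Hd; apply (continuous_comp (fun t => (t - a) / d) (clamp 0 1)); [|apply continuous_clamp; lra].
  apply (ex_derive_continuous (V := R_NormedModule)); auto_derive; lra.
Qed.

Lemma RInt_one_minus_ramp a b d : 0 < d -> d <= b - a -> RInt (fun t => 1 - ramp a d t) a b <= d.
Proof.
  intros Hd Hdb.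
  assert (ex : forall u v, ex_RInt (fun t => 1 - ramp a d t) u v).
  { intros; apply (ex_RInt_continuous (V := R_CompleteNormedModule)); intros.
    apply (continuous_minus (V := R_NormedModule)); [apply continuous_const | apply continuous_ramp, Hd]. }
  rewrite <- (RInt_Chasles _ a (a + d) b) by apply ex.
  rewrite (RInt_ext_open _ (fun _ => 0) (a + d) b) by
    (lra || (intros x Hx; unfold ramp, clamp, Rmax, Rmin;
             assert (1 < (x - a) / d) by (apply Rlt_div_r; lra); repeat destruct Rle_dec; lra)).
  rewrite RInt_const_R; unfold plus; simpl.
  enough (RInt (fun t => 1 - ramp a d t) a (a + d) <= (a + d - a) * 1) by lra.
  rewrite <- RInt_const_R; apply RInt_le; [lra | apply ex | apply ex_RInt_const |].
  intros x _; pose proof (ramp_bounds a d x); lra.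
Qed.

Lemma RInt_mul_ramp_clamp_lower (W : R -> R) a b M d B : a < b -> (forall x, continuous W x) ->
  0 < M -> 0 < d <= b - a -> 0 <= B -> (forall x, Icc a b x -> Rabs (W x) <= B) ->
  RInt (fun t => Rabs (W t)) a b - (b - a) / M - B * d
  <= RInt (fun t => W t * (ramp a d t * clamp (-1) 1 (M * W t))) a b.
Proof.
  intros hab cW HM Hd B0 HB.
  assert (exc : forall F : R -> R, (forall x, continuous F x) -> ex_RInt F a b)
    by (intros F HF; apply (ex_RInt_continuous (V := R_CompleteNormedModule)); intros; apply HF).
  assert (cA : forall x, continuous (fun t => Rabs (W t)) x)
    by (intros; apply (continuous_comp W Rabs); [apply cW | apply continuous_Rabs]).
  assert (cr : forall x, continuous (fun t => 1 - ramp a d t) x) by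
    (intros; apply (continuous_minus (V := R_NormedModule));
     [apply continuous_const | apply continuous_ramp; lra]).
  apply Rle_trans with (RInt (fun t => Rabs (W t) - 1 / M - B * (1 - ramp a d t)) a b).
  - rewrite !RInt_minus_R, RInt_const_R, RInt_scal_R;
      try (apply exc; intros; repeat first [apply cA | apply cr | apply continuous_const |
           apply (continuous_minus (V := R_NormedModule)) | apply (continuous_mult (K := R_AbsRing))]).
    assert (B * RInt (fun t => 1 - ramp a d t) a b <= B * d)
      by (apply Rmult_le_compat_l; [exact B0 | apply RInt_one_minus_ramp; lra]).
    replace ((b - a) / M) with ((b - a) * (1 / M)) by (field; lra); lra.
  - apply RInt_le; [lra | | |].
    + apply exc; intros; repeat first [apply cA | apply cr | apply continuous_const |
        apply (continuous_minus (V := R_NormedModule)) | apply (continuous_mult (K := R_AbsRing))].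
    + apply exc; intros; apply (continuous_mult (K := R_AbsRing)); [apply cW|].
      apply (continuous_mult (K := R_AbsRing)); [apply continuous_ramp; lra|].
      apply (continuous_comp (fun t => M * W t) (clamp (-1) 1)); [|apply continuous_clamp; lra].
      apply (continuous_mult (K := R_AbsRing)); [apply continuous_const | apply cW].
    + intros x Hx.
      destruct (mul_clamp_sign_bounds M (W x) HM) as [[P1 P2] P3].
      pose proof (ramp_bounds a d x); pose proof (HB x ltac:(unfold Icc; lra)).
      set (X := W x * clamp (-1) 1 (M * W x)) in *; set (r := ramp a d x) in *.
      replace (W x * (r * clamp (-1) 1 (M * W x))) with (r * X) by (unfold X; ring).
      nra.
Qed.

(* [g] follows the sign of [W] up to the clamp width [1/M], and is damped by a ramp near [a]
   so that [g a = 0]. *)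
Lemma sign_approximation (W : R -> R) a b eps : a < b -> (forall x, continuous W x) -> 0 < eps ->
  exists g : R -> R, (forall x, continuous g x) /\ g a = 0 /\ (forall x, Rabs (g x) <= 1) /\
    RInt (fun t => Rabs (W t)) a b - eps <= RInt (fun t => W t * g t) a b.
Proof.
  intros hab cW He.
  destruct (cont_on_bounded a b W ltac:(lra) (continuous_cont_on a b W cW)) as [B HB].
  assert (B0 : 0 <= B) by (eapply Rle_trans; [apply Rabs_pos | apply (HB a); unfold Icc; lra]).
  set (M := 2 * (b - a) / eps); assert (HM : 0 < M) by (apply Rdiv_lt_0_compat; lra).
  set (d := Rmin (b - a) (eps / (2 * (B + 1)))).
  assert (Hd : 0 < d <= b - a) by (split; [apply Rmin_pos; [lra | apply Rdiv_lt_0_compat; lra] | apply Rmin_l]).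
  assert (HBd : B * d <= eps / 2).
  { apply Rle_trans with ((B + 1) * (eps / (2 * (B + 1)))); [|right; field; lra].
    apply Rmult_le_compat; [lra | lra | lra | apply Rmin_r]. }
  exists (fun t => ramp a d t * clamp (-1) 1 (M * W t)); split; [|split; [|split]].
  - intros; apply (continuous_mult (K := R_AbsRing)); [apply continuous_ramp; lra|].
    apply (continuous_comp (fun t => M * W t) (clamp (-1) 1)); [|apply continuous_clamp; lra].
    apply (continuous_mult (K := R_AbsRing)); [apply continuous_const | apply cW].
  - unfold ramp; replace ((a - a) / d) with 0 by (field; lra).
    rewrite clamp_id by (unfold Icc; lra); ring.
  - intros x; rewrite Rabs_mult.
    destruct (ramp_bounds a d x); destruct (clamp_Icc (-1) 1 (M * W x)); [lra|].
    apply Rle_trans with (1 * 1); [apply Rmult_le_compat; try apply Rabs_pos | lra];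
      unfold Rabs; destruct Rcase_abs; lra.
  - eapply Rle_trans; [|apply RInt_mul_ramp_clamp_lower; eauto].
    replace ((b - a) / M) with (eps / 2) by (unfold M; field; lra); lra.
Qed.

Lemma Kn_pos n a b : a < b -> 0 < Kn n a b.
Proof.
  intros; apply Rdiv_lt_0_compat; [apply pow_lt; lra|].
  apply Rmult_lt_0_compat; [apply lt_0_INR, lt_O_fact | apply pow_lt; lra].
Qed.

Lemma En_sharp n a b c : (1 <= n)%nat -> a < b -> c < Kn n a b ->
  exists (f : R -> R) (D : nat -> R -> R),
    derivs_hyp n a b f D /\ Rabs (En n a b f D) > c * alex_norm_deriv n a b D.
Proof.
  intros hn hab Hc.
  assert (Hcm : Rmax c 0 < Kn n a b) by (apply Rmax_lub_lt; [exact Hc | apply Kn_pos, hab]).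
  destruct (sign_approximation (kernel n a b (n - 1)) a b ((Kn n a b - Rmax c 0) / 2) hab
    (continuous_kernel n a b hab (n - 1)) ltac:(lra)) as [g [cg [ga [gle Hg]]]].
  rewrite RInt_abs_kernel_last in Hg by assumption.
  set (D := fun k => iter_primitive a g (n - 1 - k)).
  assert (hd : derivs_hyp n a b (iter_primitive a g (n - 1)) D) by apply derivs_hyp_iter_primitive, cg.
  assert (HG : forall t, nth_primitive n a D t = g t)
    by (intros; unfold nth_primitive, D; rewrite Nat.sub_diag; simpl; rewrite ga; ring).
  exists (iter_primitive a g (n - 1)), D; split; [exact hd|].
  rewrite (En_kernel n a b _ D hn hab hd), Rabs_mult, pow_1_abs, Rmult_1_l.
  rewrite (RInt_ext_open _ (fun t => kernel n a b (n - 1) t * g t)) by (lra || (intros; rewrite HG; reflexivity)).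
  change (alex_norm_deriv n a b D) with (sup_norm a b (nth_primitive n a D)).
  destruct (sup_norm_spec a b _ (Rlt_le _ _ hab) (cont_on_nth_primitive n a b _ D hd)) as [Hub Hlub].
  assert (Hle1 : sup_norm a b (nth_primitive n a D) <= 1) by (apply Hlub; intros; rewrite HG; apply gle).
  assert (Hge0 : 0 <= sup_norm a b (nth_primitive n a D))
    by (eapply Rle_trans; [apply Rabs_pos | apply (Hub a); unfold Icc; lra]).
  assert (c * sup_norm a b (nth_primitive n a D) <= Rmax c 0)
    by (destruct (Rle_dec 0 c); [rewrite Rmax_left | rewrite Rmax_right]; nra).
  eapply Rlt_le_trans; [|apply Rle_abs]; lra.
Qed.

Theorem theorem4p1 (n : nat) (a b : R) (hn : (1 <= n)%nat) (hab : a < b) :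
  (forall (f : R -> R) (D : nat -> R -> R),
     derivs_hyp n a b f D ->
     in_Ac a b (distr_deriv n a b f) /\
     Rabs (En n a b f D) <= alex_norm_deriv n a b D * Kn n a b)
  /\
  (forall c : R, c < Kn n a b ->
     exists (f : R -> R) (D : nat -> R -> R),
       derivs_hyp n a b f D /\
       Rabs (En n a b f D) > c * alex_norm_deriv n a b D).
Proof.
  split.
  - intros f D hd; split; [apply (derivs_hyp_in_Ac n a b f D) | apply En_bound]; assumption.
  - intros c Hc; apply En_sharp; assumption.
Qed.
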